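(* Let $\varrho=\mathrm{Tr}_B|\psi\rangle\langle\psi|$ have eigenvalues $p_1,\dots,p_d$ and eigenbasis $\{|i\rangle\}$, and let $V_\Lambda=\sum_i\lambda_i|i\rangle\langle i|$. Then $$\sqrt{F^\Lambda_\psi}=\max_{U\ \text{unitary}}\Big|\mathrm{Tr}[UV_\Lambda U^\dagger\varrho]\Big|=\max_{U}\Big|\sum_{i}\lambda_i\sum_j p_j|u_{ij}|^2\Big|,\quad u_{ij}=\langle i|U|j\rangle,$$ and the maximum over $U$ is attained at a permutation matrix. Consequently $\sqrt{F^\Lambda_\psi}=\max_{\sigma\in S_d}\big|\sum_{i=1}^d\lambda_i\,p_{\sigma(i)}\big|$, and there is a maximizing $W\in\mathcal{W}_\Lambda$ that is diagonal in the eigenbasis of $\varrho$, so that $[W,\varrho]=0$.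
   Context: Let $d=d_A\le d_B$ and let $|\psi\rangle\in\mathbb{C}^{d_A}\otimes\mathbb{C}^{d_B}$ be a unit vector. A spectrum is a multiset $\Lambda=\{\lambda_1,\dots,\lambda_d\}$ of unimodular complex numbers $\lambda_j=e^{i\theta_j}$. Let $\mathcal{W}_\Lambda$ be the set of unitary $d\times d$ matrices acting on $\mathbb{C}^{d_A}$ whose eigenvalues, counted with multiplicity, are exactly $\Lambda$. Define $F^\Lambda_\psi=\max_{W\in\mathcal{W}_\Lambda}|\langle\psi|(W\otimes \mathbb{1}_B)|\psi\rangle|^2$. $S_d$ denotes the symmetric group on $\{1,\dots,d\}$. *)

From HB Require Import structures.
From mathcomp Require Import all_boot all_order all_algebra all_fingroup.
From mathcomp Require Import spectral.
Set Implicit Arguments. Unset Strict Implicit. Unset Printing Implicit Defensive.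
Import Order.TTheory GRing.Theory Num.Theory.
Local Open Scope ring_scope.

(* A state |psi> in C^dA (x) C^dB is given by its coefficient matrix
   psi a b = <a,b|psi> in the product basis |a>|b>. *)

(* <psi| (W (x) 1_B) |psi> : the matrix of W (x) 1_B has entries
   <a,b|W (x) 1|a',b'> = W a a' * delta_{b b'}. *)
Definition expect (C : numClosedFieldType) (dA dB : nat)
  (psi : 'M[C]_(dA, dB)) (W : 'M[C]_dA) : C :=
  \sum_(a < dA) \sum_(a' < dA) \sum_(b < dB)
     (psi a b)^* * W a a' * psi a' b.

Definition sqnorm (C : numClosedFieldType) (dA dB : nat) (psi : 'M[C]_(dA, dB)) : C :=
  \sum_(a < dA) \sum_(b < dB) `|psi a b| ^+ 2.

(* Reduced state rho = Tr_B |psi><psi|, rho a a' = sum_b psi a b conj(psi a' b). *)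
Definition rhoA (C : numClosedFieldType) (dA dB : nat) (psi : 'M[C]_(dA, dB)) : 'M[C]_dA :=
  \matrix_(a < dA, a' < dA) \sum_(b < dB) psi a b * (psi a' b)^*.

Definition adj (C : numClosedFieldType) (m n : nat) (M : 'M[C]_(m, n)) : 'M[C]_(n, m) :=
  (map_mx Num.conj M)^T.

(* W_Lambda: unitary matrices whose eigenvalues, with multiplicity, are lam. *)
Definition WLam (C : numClosedFieldType) (d : nat) (lam : 'rV[C]_d) (W : 'M[C]_d) : Prop :=
  W \is unitarymx /\ char_poly W = \prod_(i < d) ('X - (lam 0 i)%:P).

Definition unitary (C : numClosedFieldType) (d : nat) (U : 'M[C]_d) : Prop :=
  U \is unitarymx.

Definition is_max (T : Type) (C : numClosedFieldType) (P : T -> Prop) (f : T -> C) (m : C) : Prop :=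
  (exists x, P x /\ f x = m) /\ (forall x, P x -> f x <= m).

From mathcomp Require Import all_boot all_order all_algebra all_fingroup.
From mathcomp Require Import spectral ring zify.
Set Implicit Arguments. Unset Strict Implicit. Unset Printing Implicit Defensive.
Import Order.TTheory GRing.Theory Num.Theory.
Local Open Scope ring_scope.

(* Write rho = Q diag(p) Q^* for the reduced state and W = S^* diag(mu) S for a unitary
   whose spectrum mu is a relabelling lam o pi of lam.  Then <psi|(W (x) 1)|psi> =
   Tr(W rho) = sum_i mu_i sum_j |X_ji|^2 p_j with X = Q^* S^* unitary, so the weights
   B_ij = |X_ji|^2 form a doubly stochastic ("unistochastic") matrix.  The heart of the
   proof is a rearrangement inequality for doubly stochastic B: for real a and p,
   sum_i a_i (B p)_i <= max_s sum_i a_i p_(s i), proved by sorting a and p and an Abel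
   summation; rotating by the phase of the left-hand side extends it to complex lam and
   absolute values.  The same bound controls both unitary-orbit expressions g and h of the
   theorem, and every bound is attained by a permutation of the eigenbasis of rho: the
   observable Q diag(lam o s^-1) Q^* is diagonal in that basis and commutes with rho. *)

Section Rearrangement.
Variable R : numDomainType.

Definition bistochastic (d : nat) (B : 'M[R]_d) : Prop :=
  [/\ forall i j, 0 <= B i j, forall i, \sum_j B i j = 1 & forall j, \sum_i B i j = 1].

Lemma bistochastic_perm d (B : 'M[R]_d) (al be : 'S_d) :
  bistochastic B -> bistochastic (\matrix_(i, j) B (al i) (be j)).
Proof.
case=> hB hr hc; split => [i j|i|j]; first by rewrite mxE.
- under eq_bigr do rewrite mxE.
  by rewrite -(hr (al i)); apply/esym/reindex_inj/perm_inj.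
- under eq_bigr do rewrite mxE.
  by rewrite -(hc (be j)); apply/esym/reindex_inj/perm_inj.
Qed.

Definition abel_potential (A P : nat -> R) (k : nat) : R :=
  \sum_(0 <= m < k) A m * (P m.+1 - P m).

Lemma abel_potential_bound (A P : nat -> R) (d : nat) :
  (forall n m, (n <= m < d)%N -> A n <= A m) ->
  (forall n m, (n <= m < d)%N -> P n <= P m) ->
  forall i k, (i < d)%N -> (k < d)%N ->
  A i * (P k - P i) <= abel_potential A P k - abel_potential A P i.
Proof.
move=> hA hP i k hi hk; rewrite /abel_potential.
case: (leqP i k) => hik.
- rewrite (big_cat_nat (n:=i) (p:=k)) //= addrAC subrr add0r.
  rewrite -telescope_sumr // mulr_sumr; apply: ler_sum_nat => m /andP [im mk].
  by apply: ler_wpM2r; [rewrite subr_ge0; apply: hP | apply: hA]; lia.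
- rewrite (big_cat_nat (n:=k) (p:=i)) /= ?(ltnW hik) // opprD addrA subrr add0r.
  rewrite lerNr -mulrN opprB -telescope_sumr ?(ltnW hik) // mulr_sumr.
  apply: ler_sum_nat => m /andP [km mi]; rewrite mulrC [X in _ <= X]mulrC.
  by apply: ler_wpM2l; [rewrite subr_ge0; apply: hP | apply: hA]; lia.
Qed.

(* With v the Abel potential,
   A_i P_j <= (A_i P_i - v_i) + v_j, and the right-hand side sums to sum_i A_i P_i. *)
Lemma rearrangement_sorted d (A P : 'I_d -> R) (B : 'M[R]_d) :
  {homo A : i j / (i <= j)%N >-> i <= j} ->
  {homo P : i j / (i <= j)%N >-> i <= j} ->
  bistochastic B ->
  \sum_i A i * (\sum_j B i j * P j) <= \sum_i A i * P i.
Proof.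
case: d A P B => [|d] A P B hA hP [hB hr hc]; first by rewrite !big_ord0.
pose An n := A (inord n); pose Pn n := P (inord n).
pose v (i : 'I_d.+1) := abel_potential An Pn i.
have mono_inord (F : 'I_d.+1 -> R) : {homo F : i j / (i <= j)%N >-> i <= j} ->
    forall n m, (n <= m < d.+1)%N -> F (inord n) <= F (inord m).
  by move=> hF n m /andP [nm md]; apply: hF; rewrite !inordK //; lia.
have shift : forall i j, A i * P j <= (A i * P i - v i) + v j.
  move=> i j; have := abel_potential_bound (mono_inord _ hA) (mono_inord _ hP)
    (ltn_ord i) (ltn_ord j).
  rewrite /An /Pn !inord_val -/(v i) -/(v j) mulrBr -subr_ge0 => h.
  by rewrite -subr_ge0; congr (0 <= _): h; ring.
apply: (@le_trans _ _ (\sum_i \sum_j B i j * ((A i * P i - v i) + v j))).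
  apply: ler_sum => i _; rewrite mulr_sumr; apply: ler_sum => j _.
  by rewrite mulrCA; apply: ler_wpM2l.
under eq_bigr do (under eq_bigr do rewrite mulrDr; rewrite big_split /= -mulr_suml hr mul1r).
rewrite big_split /= exchange_big /=.
under [X in _ + X <= _]eq_bigr do rewrite -mulr_suml hc mul1r.
by rewrite sumrB addrNK.
Qed.

Lemma sort_perm d (a : 'I_d -> R) : (forall i, a i \is Num.real) ->
  exists al : 'S_d, {homo a \o al : i j / (i <= j)%N >-> i <= j}.
Proof.
move=> ha; pose leT i j := a i <= a j.
have leT_total : total leT by move=> i j; exact: real_leVge.
have leT_trans : transitive leT by move=> j i k; exact: le_trans.
pose s := sort_tuple leT (ord_tuple d).
have /tuple_permP [al hal] : perm_eq s (ord_tuple d) by rewrite perm_sort.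
have alE k : al k = tnth s k by rewrite (val_inj hal) tnth_map !tnth_ord_tuple.
exists al => i j hij /=; rewrite !alE !(tnth_nth i).
apply: (sorted_leq_nth leT_trans _ i (sort_sorted leT_total _)) => //.
- by move=> x; exact: lexx.
- by rewrite inE size_tuple.
- by rewrite inE size_tuple.
Qed.

(* Rearrangement inequality for arbitrary real families: sort both and apply the
   sorted case to the correspondingly permuted doubly stochastic matrix. *)
Lemma rearrangement_bistochastic d (a p : 'I_d -> R) (B : 'M[R]_d) :
  (forall i, a i \is Num.real) -> (forall i, p i \is Num.real) -> bistochastic B ->
  exists s : 'S_d, \sum_i a i * (\sum_j B i j * p j) <= \sum_i a i * p (s i).
Proof.
move=> ha hp hB.
have [al hal] := sort_perm ha; have [be hbe] := sort_perm hp.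
have h := rearrangement_sorted hal hbe (bistochastic_perm al be hB).
exists (al^-1 * be)%g.
rewrite (reindex_inj (@perm_inj _ al)) [X in _ <= X](reindex_inj (@perm_inj _ al)) /=.
congr (_ <= _): h.
- apply: eq_bigr => i _; congr (_ * _).
  by rewrite [RHS](reindex_inj (@perm_inj _ be)); apply: eq_bigr => j _; rewrite mxE.
- by apply: eq_bigr => i _; rewrite permM permK.
Qed.

Lemma exists_argmax (T : finType) (f : T -> R) (x0 : T) :
  (forall x, f x \is Num.real) -> exists x, forall y, f y <= f x.
Proof.
move=> hf.
suff [x hx] : exists x, forall y, y \in x0 :: enum T -> f y <= f x.
  by exists x => y; apply: hx; rewrite inE mem_enum orbT.
elim: (enum T) => [|a s [x hx]]; first by exists x0 => y; rewrite inE => /eqP ->.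
have hx0 : f x0 <= f x by apply: hx; exact: mem_head.
have hxs y : y \in s -> f y <= f x by move=> ys; apply: hx; rewrite inE ys orbT.
case/orP: (real_leVge (hf a) (hf x)) => hax; [exists x | exists a] => y;
  rewrite !inE => /or3P [/eqP->|/eqP->|/hxs hy] //.
- exact: le_trans hx0 hax.
- exact: le_trans hy hax.
Qed.
End Rearrangement.

Section ComplexRearrangement.
Variable C : numClosedFieldType.

(* Complex version: multiply by the unit phase z with z T = |T| and apply the real
   inequality to the real parts Re(z lam_i). *)
Lemma rearrangement_bistochastic_norm d (lam p : 'I_d -> C) (B : 'M[C]_d) :
  (forall i, p i \is Num.real) -> bistochastic B ->
  exists s : 'S_d, `|\sum_i lam i * (\sum_j B i j * p j)| <= `|\sum_i lam i * p (s i)|.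
Proof.
move=> hp hB; set T := \sum_i _.
have [->|T_neq0] := eqVneq T 0; first by exists 1%g; rewrite normr0 normr_ge0.
pose z := T^* / `|T|.
have zT : z * T = `|T| by rewrite /z mulrAC -normCKC expr2 mulfK ?normr_eq0.
have nz : `|z| = 1.
  by rewrite /z normrM normfV norm_conjC normr_id mulfV ?normr_eq0.
have Re_zlam (q : 'I_d -> C) : (forall i, q i \is Num.real) ->
    'Re (z * \sum_i lam i * q i) = \sum_i 'Re (z * lam i) * q i.
  move=> hq; rewrite mulr_sumr raddf_sum; apply: eq_bigr => i _.
  by rewrite mulrA; apply: ReMr.
have Bp_real i : \sum_j B i j * p j \is Num.real.
  case: hB => hB0 _ _; apply: rpred_sum => j _.
  by rewrite rpredM ?hp ?ger0_real.
have [s hs] :=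
  rearrangement_bistochastic (a := fun i => 'Re (z * lam i)) (fun i => Creal_Re _) hp hB.
exists s.
have -> : `|T| = 'Re (z * T) by rewrite zT; apply/esym/Creal_ReP/normr_real.
rewrite Re_zlam //; apply: le_trans hs _; rewrite -Re_zlam //.
apply: le_trans (leif_Re_Creal _).1 _.
by rewrite normrM nz mul1r.
Qed.
End ComplexRearrangement.

Lemma char_poly_similar (R : comUnitRingType) n (P D : 'M[R]_n) :
  P \in unitmx -> char_poly (invmx P *m D *m P) = char_poly D.
Proof.
move=> P_unit; rewrite /char_poly /char_poly_mx !map_mxM.
set P' := map_mx _ P; set Pi' := map_mx _ (invmx P); set D' := map_mx _ D.
have PiP : Pi' *m P' = 1%:M by rewrite -map_mxM mulVmx // map_mx1.
have -> : 'X%:M - Pi' *m D' *m P' = Pi' *m ('X%:M - D') *m P'.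
  by rewrite mulmxBr mulmxBl scalar_mxC -!mulmxA PiP mulmx1.
by rewrite !det_mulmx mulrAC -det_mulmx PiP det1 mul1r.
Qed.

Lemma XsubC_prod_perm (F : fieldType) n (mu lam : 'rV[F]_n) :
  \prod_(i < n) ('X - (mu 0 i)%:P) = \prod_(i < n) ('X - (lam 0 i)%:P) ->
  exists pi : 'S_n, forall i, mu 0 i = lam 0 (pi i).
Proof.
move=> eq_prod.
have /tuple_permP [pi hpi] : perm_eq [tuple mu 0 i | i < n] [tuple lam 0 i | i < n].
  by apply: prod_XsubC_eq; rewrite !big_map.
exists pi => i; have := congr1 (fun s : seq F => nth 0 s i) hpi.
by rewrite -!tnth_nth !tnth_mktuple.
Qed.

Section UnitaryMatrices.
Variable C : numClosedFieldType.
Local Open Scope sesquilinear_scope.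

Lemma unitary_bistochastic n (X : 'M[C]_n) :
  X \is unitarymx -> bistochastic (\matrix_(i, j) `|X i j| ^+ 2).
Proof.
move=> /unitarymxP XXt; have XtX := mulmx1C XXt.
split=> [i j|i|j]; first by rewrite mxE exprn_ge0.
- have := congr1 (fun M : 'M[C]_n => M i i) XXt; rewrite !mxE eqxx mulr1n => <-.
  by apply: eq_bigr => j _; rewrite !mxE normCK.
- have := congr1 (fun M : 'M[C]_n => M j j) XtX; rewrite !mxE eqxx mulr1n => <-.
  by apply: eq_bigr => i _; rewrite !mxE normCKC.
Qed.

Lemma diag_mx_unitary n (mu : 'rV[C]_n) :
  (forall i, `|mu 0 i| = 1) -> diag_mx mu \is unitarymx.
Proof.
move=> hmu; apply/unitarymxP/matrixP => i j; rewrite mul_diag_mx !mxE.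
have [->|_] := eqVneq i j; last by rewrite mulr0n conjC0 mulr0.
by rewrite mulr1n -normCK hmu expr1n.
Qed.

Lemma perm_mx_unitary n (s : 'S_n) : (perm_mx s : 'M[C]_n) \is unitarymx.
Proof.
apply/unitarymxP; rewrite tr_perm_mx.
have -> : map_mx (@Num.conj C) (perm_mx s^-1) = (perm_mx s^-1 : 'M[C]_n).
  by apply/matrixP => i j; rewrite !mxE rmorph_nat.
by rewrite -perm_mxM mulgV perm_mx1.
Qed.

Lemma perm_mx_weight_row n (s : 'S_n) (p : 'I_n -> C) i :
  \sum_j p j * `|(perm_mx s : 'M[C]_n) i j| ^+ 2 = p (s i).
Proof.
rewrite (bigD1 (s i)) //= big1 ?addr0 => [|j /negbTE sij].
  by rewrite !mxE eqxx normr1 expr1n mulr1.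
by rewrite !mxE eq_sym sij normr0 expr0n mulr0.
Qed.

Lemma perm_mx_weight_col n (s : 'S_n) (p : 'I_n -> C) i :
  \sum_j `|(perm_mx s : 'M[C]_n) j i| ^+ 2 * p j = p (s^-1 i)%g.
Proof.
rewrite -perm_mx_weight_row; apply: eq_bigr => j _.
by rewrite mulrC -tr_perm_mx !mxE.
Qed.

Lemma trace_conj_diag n (Y : 'M[C]_n) (mu p : 'rV[C]_n) :
  \tr (Y *m diag_mx mu *m Y^t* *m diag_mx p) =
  \sum_i mu 0 i * \sum_j `|Y j i| ^+ 2 * p 0 j.
Proof.
rewrite /mxtrace; under eq_bigr do rewrite mul_mx_diag !mxE mulr_suml.
rewrite exchange_big /=; apply: eq_bigr => i _; rewrite mulr_sumr.
by apply: eq_bigr => j _; rewrite mul_mx_diag !mxE normCK; ring.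
Qed.
End UnitaryMatrices.

Section ReducedState.
Variable C : numClosedFieldType.
Local Open Scope sesquilinear_scope.

Lemma adjE m n (M : 'M[C]_(m, n)) : adj M = M^t*.
Proof. by rewrite /adj map_trmx. Qed.

Lemma rhoA_gram dA dB (psi : 'M[C]_(dA, dB)) : rhoA psi = psi *m psi^t*.
Proof. by apply/matrixP => a a'; rewrite !mxE; apply: eq_bigr => b _; rewrite !mxE. Qed.

(* <psi|(W (x) 1)|psi> = Tr(W rho): the partial trace is dual to W |-> W (x) 1. *)
Lemma expect_trace dA dB (psi : 'M[C]_(dA, dB)) (W : 'M[C]_dA) :
  expect psi W = \tr (W *m rhoA psi).
Proof.
apply: eq_bigr => a _; rewrite mxE; apply: eq_bigr => a' _.
by rewrite mxE mulr_sumr; apply: eq_bigr => b _; ring.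
Qed.

Variables (dA dB : nat) (psi : 'M[C]_(dA, dB)) (lam p : 'rV[C]_dA) (Q : 'M[C]_dA).
Hypothesis Q_unitary : Q \is unitarymx.
Hypothesis rho_diag : rhoA psi = Q *m diag_mx p *m Q^t*.

Let QtQ : Q^t* *m Q = 1%:M := mulmx1C (unitarymxP Q_unitary).

Lemma Q_frame (M : 'M[C]_dA) : Q^t* *m (Q *m M *m Q^t*) *m Q = M.
Proof. by rewrite !mulmxA QtQ mul1mx -mulmxA QtQ mulmx1. Qed.

Lemma Q_conjM (M N : 'M[C]_dA) :
  (Q *m M *m Q^t*) *m (Q *m N *m Q^t*) = Q *m (M *m N) *m Q^t*.
Proof. by rewrite !mulmxA -(mulmxA _ (Q^t*)) QtQ mulmx1. Qed.

Lemma Q_conj_trace (M : 'M[C]_dA) : \tr (Q *m M *m Q^t*) = \tr M.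
Proof. by rewrite mxtrace_mulC mulmxA QtQ mul1mx. Qed.

Lemma rho_eigen_ge0 j : 0 <= p 0 j.
Proof.
have <- : (Q^t* *m rhoA psi *m Q) j j = p 0 j.
  by rewrite rho_diag Q_frame mxE eqxx mulr1n.
have -> : Q^t* *m rhoA psi *m Q = (Q^t* *m psi) *m (Q^t* *m psi)^t*.
  by rewrite rhoA_gram trmx_mul map_mxM trmxCK !mulmxA.
by rewrite mxE; apply: sumr_ge0 => b _; rewrite !mxE mul_conjC_ge0.
Qed.

Lemma trace_rho_conj_diag (Y : 'M[C]_dA) (mu : 'rV[C]_dA) :
  \tr (Y *m diag_mx mu *m Y^t* *m rhoA psi) =
  \sum_i mu 0 i * \sum_j `|(Q^t* *m Y) j i| ^+ 2 * p 0 j.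
Proof.
rewrite -trace_conj_diag rho_diag !mulmxA mxtrace_mulC !mulmxA.
by rewrite trmx_mul map_mxM trmxCK !mulmxA.
Qed.

Definition perm_value (s : 'S_dA) : C := `|\sum_i lam 0 i * p 0 (s i)|.

Lemma perm_value_weights (s : 'S_dA) :
  `|\sum_i lam 0 i * \sum_j p 0 j * `|(perm_mx s : 'M[C]_dA) i j| ^+ 2| = perm_value s.
Proof.
by rewrite /perm_value; congr `|_|; apply: eq_bigr => i _; rewrite perm_mx_weight_row.
Qed.

Lemma perm_conj_unitary (s : 'S_dA) : Q *m perm_mx s *m Q^t* \is unitarymx.
Proof. by rewrite !mul_unitarymx ?trmxC_unitary ?perm_mx_unitary. Qed.

Lemma unistochastic_bound (mu : 'rV[C]_dA) (pi : 'S_dA) (X : 'M[C]_dA) :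
  (forall i, mu 0 i = lam 0 (pi i)) -> X \is unitarymx ->
  exists s, `|\sum_i mu 0 i * \sum_j `|X j i| ^+ 2 * p 0 j| <= perm_value s.
Proof.
move=> muE; rewrite -trmx_unitary => /unitary_bistochastic hB.
have p_real j : p 0 j \is Num.real := ger0_real (rho_eigen_ge0 j).
have [s hs] := rearrangement_bistochastic_norm (fun i => lam 0 (pi i)) p_real hB.
exists (pi^-1 * s)%g.
have -> : perm_value (pi^-1 * s)%g = `|\sum_i lam 0 (pi i) * p 0 (s i)|.
  rewrite /perm_value (reindex_inj (@perm_inj _ pi)) /=.
  by congr `|_|; apply: eq_bigr => i _; rewrite permM permK.
congr (_ <= _): hs; congr `|_|; apply: eq_bigr => i _; rewrite muE; congr (_ * _).
by apply: eq_bigr => j _; rewrite !mxE.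
Qed.

Lemma orbit_trace (U : 'M[C]_dA) :
  \tr (U *m (Q *m diag_mx lam *m Q^t*) *m U^t* *m rhoA psi) =
  \sum_i lam 0 i * \sum_j `|(Q^t* *m U *m Q) j i| ^+ 2 * p 0 j.
Proof.
have -> : U *m (Q *m diag_mx lam *m Q^t*) *m U^t* =
          (U *m Q) *m diag_mx lam *m (U *m Q)^t*.
  by rewrite trmx_mul map_mxM !mulmxA.
by rewrite trace_rho_conj_diag mulmxA.
Qed.

Lemma orbit_trace_bound (U : 'M[C]_dA) : U \is unitarymx ->
  exists s, `|\tr (U *m (Q *m diag_mx lam *m Q^t*) *m U^t* *m rhoA psi)| <= perm_value s.
Proof.
move=> U_unitary; rewrite orbit_trace; apply: (unistochastic_bound (pi := 1%g)).
  by move=> i; rewrite perm1.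
by rewrite !mul_unitarymx ?trmxC_unitary.
Qed.

Lemma orbit_trace_perm (s : 'S_dA) :
  `|\tr ((Q *m perm_mx s^-1 *m Q^t*) *m (Q *m diag_mx lam *m Q^t*) *m
         (Q *m perm_mx s^-1 *m Q^t*)^t* *m rhoA psi)| = perm_value s.
Proof.
rewrite orbit_trace Q_frame /perm_value; congr `|_|; apply: eq_bigr => i _.
by rewrite perm_mx_weight_col invgK.
Qed.

Lemma weight_bound (X : 'M[C]_dA) : X \is unitarymx ->
  exists s, `|\sum_i lam 0 i * \sum_j p 0 j * `|X i j| ^+ 2| <= perm_value s.
Proof.
rewrite -trmx_unitary => XT_unitary.
have [|s hs] := unistochastic_bound (mu := lam) (pi := 1%g) _ XT_unitary.
  by move=> i; rewrite perm1.
exists s; congr (_ <= _): hs; congr `|_|; apply: eq_bigr => i _; congr (_ * _).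
by apply: eq_bigr => j _; rewrite mxE mulrC.
Qed.

(* Every W with spectrum lam is unitarily diagonalisable, W = S^* diag(lam o pi) S,
   so Tr(W rho) is controlled by the unistochastic bound. *)
Lemma spectrum_trace_bound (W : 'M[C]_dA) : WLam lam W ->
  exists s, `|\tr (W *m rhoA psi)| <= perm_value s.
Proof.
case=> W_unitary W_char.
have /orthomx_spectralP W_spec : W \is normalmx.
  by apply/normalmxP; rewrite (unitarymxP W_unitary) (mulmx1C (unitarymxP W_unitary)).
set S := spectralmx W in W_spec; set mu := spectral_diag W in W_spec.
have S_unitary : S \is unitarymx := spectral_unitarymx W.
have [pi mu_lam] : exists pi : 'S_dA, forall i, mu 0 i = lam 0 (pi i).
  apply: XsubC_prod_perm; rewrite -W_char W_spec char_poly_similar ?unitarymx_unit //.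
  rewrite char_poly_trig ?diag_mx_is_trig //.
  by apply: eq_bigr => i _; rewrite mxE eqxx mulr1n.
rewrite W_spec invmx_unitary // -{2}[S]trmxCK trace_rho_conj_diag.
by apply: unistochastic_bound mu_lam _; rewrite mul_unitarymx ?trmxC_unitary.
Qed.

Definition diag_observable (s : 'S_dA) : 'M[C]_dA :=
  Q *m diag_mx (\row_j lam 0 (s^-1 j)%g) *m Q^t*.

Lemma diag_observable_spectrum (s : 'S_dA) :
  (forall i, `|lam 0 i| = 1) -> WLam lam (diag_observable s).
Proof.
move=> lam_unimodular; split.
  by rewrite !mul_unitarymx ?trmxC_unitary ?diag_mx_unitary // => i; rewrite mxE.
have -> : diag_observable s = invmx (Q^t*) *m diag_mx (\row_j lam 0 (s^-1 j)%g) *m Q^t*.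
  by rewrite invmx_unitary ?trmxC_unitary // trmxCK.
rewrite char_poly_similar.
  rewrite char_poly_trig ?diag_mx_is_trig // [RHS](reindex_inj (@perm_inj _ s^-1)) /=.
  by apply: eq_bigr => i _; rewrite !mxE eqxx mulr1n.
by rewrite unitarymx_unit ?trmxC_unitary.
Qed.

Lemma diag_observable_trace (s : 'S_dA) :
  \tr (diag_observable s *m rhoA psi) = \sum_i lam 0 i * p 0 (s i).
Proof.
rewrite rho_diag Q_conjM Q_conj_trace mulmx_diag mxtrace_diag.
rewrite [RHS](reindex_inj (@perm_inj _ s^-1)) /=.
by apply: eq_bigr => i _; rewrite !mxE permKV.
Qed.

Lemma diag_observable_commutes (s : 'S_dA) :
  diag_observable s *m rhoA psi = rhoA psi *m diag_observable s.
Proof. by rewrite rho_diag !Q_conjM diag_mxC. Qed.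
End ReducedState.

Local Open Scope sesquilinear_scope.

Theorem lemma1 (C : numClosedFieldType) (dA dB : nat) (hd : (dA <= dB)%N)
  (psi : 'M[C]_(dA, dB)) (lam p : 'rV[C]_dA) (Q : 'M[C]_dA) :
  sqnorm psi = 1 ->
  (forall i, `|lam 0 i| = 1) ->
  unitary Q ->
  rhoA psi = Q *m diag_mx p *m adj Q ->
  let V := Q *m diag_mx lam *m adj Q in
  let g := fun U : 'M[C]_dA => `|\tr (U *m V *m adj U *m rhoA psi)| in
  let h := fun U : 'M[C]_dA =>
    `|\sum_(i < dA) lam 0 i * \sum_(j < dA) p 0 j * `|(adj Q *m U *m Q) i j| ^+ 2| in
  exists m : C, 0 <= m /\
    (* F^Lambda_psi = m^2, i.e. sqrt F^Lambda_psi = m *)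
    is_max (WLam lam) (fun W => `|expect psi W| ^+ 2) (m ^+ 2) /\
    is_max (@unitary C dA) g m /\
    is_max (@unitary C dA) h m /\
    (* maxima attained at permutation matrices (in the eigenbasis of rho) *)
    (exists s : 'S_dA, g (Q *m perm_mx s *m adj Q) = m) /\
    (exists s : 'S_dA, h (Q *m perm_mx s *m adj Q) = m) /\
    is_max (fun _ : 'S_dA => True)
      (fun s => `|\sum_(i < dA) lam 0 i * p 0 (s i)|) m /\
    (exists W, WLam lam W /\ is_diag_mx (adj Q *m W *m Q) /\
       `|expect psi W| ^+ 2 = m ^+ 2 /\ W *m rhoA psi = rhoA psi *m W).
Proof.
move=> _ lam_unimodular Q_unitary; rewrite !adjE => rho_diag V g h.
pose best := perm_value lam p.
have [s0 s0_max] := exists_argmax (f := best) 1%g (fun s => normr_real _).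
have below_best x : (exists s, x <= best s) -> x <= best s0.
  by case=> s hs; exact: le_trans hs (s0_max s).
pose W0 := diag_observable lam Q s0.
have W0_expect : `|expect psi W0| = best s0.
  by rewrite expect_trace (diag_observable_trace lam Q_unitary rho_diag).
have g_perm : g (Q *m perm_mx s0^-1 *m Q^t*) = best s0.
  by rewrite /g /V adjE (orbit_trace_perm lam Q_unitary rho_diag).
have h_perm : h (Q *m perm_mx s0 *m Q^t*) = best s0.
  by rewrite /h Q_frame // perm_value_weights.
exists (best s0); split; first exact: normr_ge0.
split; [split | split; [split | split; [split | split; [|split; [|split]]]]].
- by exists W0; rewrite W0_expect; split=> //; exact: diag_observable_spectrum.
- move=> W W_spec; apply: lerXn2r; rewrite ?nnegrE ?normr_ge0 // expect_trace.
  exact/below_best/(spectrum_trace_bound Q_unitary rho_diag).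
- by exists (Q *m perm_mx s0^-1 *m Q^t*); split=> //; exact: perm_conj_unitary.
- move=> U U_unitary; rewrite /g /V adjE.
  exact/below_best/(orbit_trace_bound lam Q_unitary rho_diag).
- by exists (Q *m perm_mx s0 *m Q^t*); split=> //; exact: perm_conj_unitary.
- move=> U U_unitary; apply/below_best/(weight_bound lam Q_unitary rho_diag).
  by rewrite !mul_unitarymx ?trmxC_unitary.
- by exists s0^-1%g.
- by exists s0.
- by split=> [|s _]; [exists s0 | exact: s0_max].
- exists W0; split; first exact: diag_observable_spectrum.
  split; first by rewrite Q_frame // diag_mx_is_diag.
  by rewrite W0_expect; split=> //; exact: (diag_observable_commutes lam Q_unitary rho_diag).
Qed.
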